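(* Let $n$ be an odd perfect number such that $15 \mid n$, $5^{\alpha} \,\|\, n$ and $3^{2b} \,\|\, n$ for some positive integers $\alpha, b$. If $3 \mid (\alpha+1)(2b+1)$, then $n$ has a good prime divisor.
   Context: A positive integer $n$ is perfect if $\sigma(n)=2n$, where $\sigma$ is the sum-of-divisors function. The notation $a \,\|\, b$ means $a \mid b$ and $\gcd(a, b/a) = 1$. Let $\Phi_3(x) = x^2+x+1$. Let $\Sigma$ be the set of primes $p$ with $p \equiv 2$ or $p \equiv 4 \pmod 7$. For a prime $x > 7$, let $T(x)$ be the set of primes $q \neq 3$ with $q \mid \Phi_3(x)$. For a prime $p > 7$, define sets $S_n(p)$ recursively by $S_0(p) = \{p\}$ and $S_{n+1}(p) = S_n(p) \cup \bigcup_{x \in S_n(p)} T(x)$. A prime $p > 7$ is called good if $S_n(p) \cap \Sigma \neq \emptyset$ for some integer $n \ge 0$. *)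

From mathcomp Require Import all_boot.
Set Implicit Arguments. Unset Strict Implicit. Unset Printing Implicit Defensive.

Definition sigma (n : nat) : nat := \sum_(d <- divisors n) d.

Definition perfect (n : nat) : Prop := 0 < n /\ sigma n = 2 * n.

Definition unitary_div (a b : nat) : Prop := a %| b /\ coprime a (b %/ a).

Definition Phi3 (x : nat) : nat := x ^ 2 + x + 1.

Definition in_Sigma (q : nat) : Prop := prime q /\ (q %% 7 = 2 \/ q %% 7 = 4).

Definition in_T (x q : nat) : Prop := prime q /\ q <> 3 /\ q %| Phi3 x.

Fixpoint in_S (k p q : nat) : Prop :=
  match k with
  | 0 => q = p
  | k'.+1 => in_S k' p q \/ exists x, in_S k' p x /\ in_T x q
  end.

Definition good (p : nat) : Prop :=
  prime p /\ 7 < p /\ exists k q, in_S k p q /\ in_Sigma q.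

From Stdlib Require Import ZArith Zpow_facts Lia.
From mathcomp Require Import all_boot cyclic zify.

(* If 3 divides e + 1, then Phi3 p = 1 + p + p^2 divides
   sigma (p ^ e) = 1 + p + ... + p^e.  A unitary divisor a of n satisfies
   sigma a | sigma n, which is 2 n for perfect n; as Phi3 p is odd, it divides n.
   So 31 = Phi3 5 or 13 = Phi3 3 divides n, and both primes are good:
   Phi3 31 = 3 * 331 with 331 = 2 (mod 7), while from 13 the chain
   13, 61, 97, 3169, 3348577, 3737657091169, 987900542491 (= 2 mod 7)
   follows prime factors of Phi3 of the previous term.  The large primes are
   certified by Pocklington's criterion, evaluated on binary integers. *)

Set Implicit Arguments.
Unset Strict Implicit.
Unset Printing Implicit Defensive.

Lemma dvdn_coprime_gcdM d m n : coprime m n -> d %| m * n ->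
  d = gcdn d m * gcdn d n.
Proof.
move=> cmn dmn; apply/eqP; rewrite eqn_dvd; apply/andP; split.
  rewrite muln_gcdl !muln_gcdr !dvdn_gcd dmn (dvdn_mulr _ (dvdnn d)).
  by rewrite (dvdn_mulr _ (dvdnn d)) (dvdn_mull _ (dvdnn d)).
rewrite Gauss_dvd ?dvdn_gcdl //.
exact: coprime_dvdl (dvdn_gcdr d m) (coprime_dvdr (dvdn_gcdr d n) cmn).
Qed.

Lemma divisors_coprime m n : 0 < m -> 0 < n -> coprime m n ->
  perm_eq (divisors (m * n)) [seq d1 * d2 | d1 <- divisors m, d2 <- divisors n].
Proof.
move=> m0 n0 cmn.
have gcd_factor d1 d2 : d1 %| m -> d2 %| n ->
    gcdn m (d1 * d2) = d1 /\ gcdn n (d1 * d2) = d2.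
  move=> d1m d2n; split.
    by rewrite Gauss_gcdl ?(coprime_dvdr d2n cmn) //; apply/gcdn_idPr.
  by rewrite Gauss_gcdr ?(coprime_dvdr d1m) 1?coprime_sym //; apply/gcdn_idPr.
apply: uniq_perm; first exact: divisors_uniq.
  apply: allpairs_uniq; rewrite ?divisors_uniq //.
  move=> [d1 d2] [e1 e2] /allpairsP[[x1 x2] /= [x1m x2n [-> ->]]].
  move=> /allpairsP[[y1 y2] /= [y1m y2n [-> ->]]] /= eq_prod.
  rewrite -!dvdn_divisors // in x1m x2n y1m y2n.
  have [gx1 gx2] := gcd_factor _ _ x1m x2n; have [gy1 gy2] := gcd_factor _ _ y1m y2n.
  by move: gx1 gx2; rewrite eq_prod gy1 gy2 => <- <-.
move=> d; rewrite -dvdn_divisors ?muln_gt0 ?m0 //; apply/idP/idP.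
  move=> dmn; apply/allpairsP; exists (gcdn d m, gcdn d n).
  by rewrite -!dvdn_divisors ?dvdn_gcdr //=; split=> //; exact: dvdn_coprime_gcdM.
case/allpairsP=> [[d1 d2] /= [d1m d2n ->]].
by rewrite -!dvdn_divisors // in d1m d2n; exact: dvdn_mul.
Qed.

Lemma sigma_coprime m n : 0 < m -> 0 < n -> coprime m n ->
  sigma (m * n) = sigma m * sigma n.
Proof.
move=> m0 n0 cmn; rewrite /sigma (perm_big _ (divisors_coprime m0 n0 cmn)).
by rewrite big_allpairs_dep big_distrlr.
Qed.

Lemma sigma_prime_pow p e : prime p -> sigma (p ^ e) = \sum_(i < e.+1) p ^ i.
Proof.
move=> p_pr; rewrite /sigma -(big_mkord xpredT (expn p)) -(big_map (expn p) xpredT id).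
apply/perm_big/uniq_perm; first exact: divisors_uniq.
  by rewrite map_inj_uniq ?iota_uniq //; exact: expnI (prime_gt1 p_pr).
move=> d; rewrite -dvdn_divisors ?expn_gt0 ?prime_gt0 //; apply/idP/mapP.
  by case/dvdn_pfactor=> // i le_ie ->; exists i; rewrite // mem_iota add0n ltnS.
by case=> i; rewrite mem_iota => /andP[_ lt_ie] ->; apply/dvdn_pfactor=> //; exists i.
Qed.

Lemma dvdn_sum_expn x k m : k %| m -> \sum_(i < k) x ^ i %| \sum_(i < m) x ^ i.
Proof.
case/dvdnP=> j ->; elim: j => [|j IHj]; first by rewrite mul0n big_ord0 dvdn0.
rewrite mulSn big_split_ord /=.
under [X in _ + X]eq_bigr do rewrite expnD.
by rewrite -big_distrr /= dvdn_add ?dvdn_mull.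
Qed.

Lemma Phi3E x : Phi3 x = \sum_(i < 3) x ^ i.
Proof. by rewrite /Phi3 !big_ord_recr big_ord0 /=; lia. Qed.

Lemma odd_Phi3 x : odd (Phi3 x).
Proof. by rewrite /Phi3 !oddD oddX addbb. Qed.

Lemma Phi3_dvd_sigma_prime_pow p e : prime p -> 3 %| e.+1 -> Phi3 p %| sigma (p ^ e).
Proof. by move=> p_pr dvd3; rewrite Phi3E sigma_prime_pow // dvdn_sum_expn. Qed.

Lemma sigma_dvd_unitary a n : 0 < n -> unitary_div a n -> sigma a %| sigma n.
Proof.
move=> n0 [a_dvd_n a_coprime]; have a0 := dvdn_gt0 n0 a_dvd_n.
have cof0 : 0 < n %/ a by rewrite divn_gt0 // dvdn_leq.
by rewrite -{1}(divnK a_dvd_n) mulnC sigma_coprime // dvdn_mulr.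
Qed.

Lemma perfect_odd_dvd n d : perfect n -> odd d -> d %| sigma n -> d %| n.
Proof. by case=> _ ->; rewrite -coprimen2 => /Gauss_dvdr ->. Qed.

Lemma Phi3_dvd_perfect n p e : perfect n -> prime p -> unitary_div (p ^ e) n ->
  3 %| e.+1 -> Phi3 p %| n.
Proof.
move=> n_perfect p_pr pe_unitary dvd3; apply: (perfect_odd_dvd n_perfect (odd_Phi3 p)).
apply: dvdn_trans (Phi3_dvd_sigma_prime_pow p_pr dvd3) _.
by apply: sigma_dvd_unitary pe_unitary; case: n_perfect.
Qed.

Lemma expn_gcdn_mod1 a x y p : 0 < x ->
  a ^ x = 1 %[mod p] -> a ^ y = 1 %[mod p] -> a ^ gcdn x y = 1 %[mod p].
Proof.
move=> x0 ax1 ay1; have [k _ /dvdnP[j gcdE]] := Bezoutl y x0.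
have ayk1 : a ^ (k * y) = 1 %[mod p] by rewrite mulnC expnM -modnXm ay1 modnXm exp1n.
rewrite -[a ^ gcdn x y]muln1 -modnMmr -ayk1 modnMmr -expnD gcdE.
by rewrite mulnC expnM -modnXm ax1 modnXm exp1n.
Qed.

Lemma pocklington_dvdn_pred a m p q : prime p -> prime q -> 0 < m -> q %| m ->
  a ^ m = 1 %[mod p] -> a ^ (m %/ q) != 1 %[mod p] -> q %| p.-1.
Proof.
move=> p_pr q_pr m0 q_dvd_m am1; apply: contraR => q_ndvd.
have ap_coprime : coprime a p.
  rewrite coprime_sym prime_coprime //; apply/negP => /eqP p_dvd_a.
  by move: am1; rewrite -modnXm p_dvd_a exp0n // mod0n modn_small ?prime_gt1.
have fermat : a ^ p.-1 = 1 %[mod p] by rewrite -totient_prime // Euler_exp_totient.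
have : gcdn m p.-1 %| m %/ q.
  have q_coprime : coprime (gcdn m p.-1) q.
    rewrite coprime_sym prime_coprime //; apply: contra q_ndvd => /dvdn_trans; apply.
    exact: dvdn_gcdr.
  by rewrite -(Gauss_dvdr _ q_coprime) mulnC divnK // dvdn_gcdl.
case/dvdnP=> k ->; apply/eqP.
by rewrite mulnC expnM -modnXm expn_gcdn_mod1 // modnXm exp1n.
Qed.

Lemma pocklington N a qs : 1 < N -> all prime qs -> all (dvdn^~ N.-1) qs ->
  a ^ N.-1 = 1 %[mod N] ->
  all (fun q => coprime (a ^ (N.-1 %/ q) %% N).-1 N) qs ->
  N < (\big[lcmn/1]_(q <- qs) q).+1 ^ 2 -> prime N.
Proof.
move=> N1 qs_prime qs_dvd fermat qs_coprime.
apply: contraTT => /primePns[|[p [p_pr p2_le_N p_dvd_N]]]; first by rewrite ltnNge N1.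
have N1_gt0 : 0 < N.-1 by rewrite -subn1 subn_gt0.
have fermat_p : a ^ N.-1 = 1 %[mod p] by rewrite -(modn_dvdm _ p_dvd_N) fermat modn_dvdm.
have q_dvd_pred q : q \in qs -> q %| p.-1.
  move=> q_in; have q_pr := allP qs_prime q q_in.
  apply: (pocklington_dvdn_pred p_pr q_pr N1_gt0 (allP qs_dvd q q_in) fermat_p).
  apply/negP=> /eqP root1; set r := a ^ (N.-1 %/ q) %% N.
  have r_mod : r = 1 %[mod p] by rewrite modn_dvdm.
  have r_gt0 : 0 < r by case: posnP r_mod => // ->; rewrite mod0n modn_small ?prime_gt1.
  have : p %| gcdn r.-1 N.
    by rewrite dvdn_gcd p_dvd_N andbT -subn1 -eqn_mod_dvd //; apply/eqP.
  by rewrite (eqP (allP qs_coprime q q_in)) dvdn1 => /eqP p1; rewrite p1 in p_pr.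
have lcm_dvd : \big[lcmn/1]_(q <- qs) q %| p.-1.
  rewrite big_seq; apply: (big_ind (dvdn^~ p.-1)) => [|x y x_dvd y_dvd|q q_in].
  - exact: dvd1n.
  - by rewrite dvdn_lcm x_dvd.
  - exact: q_dvd_pred.
rewrite -leqNgt; apply: leq_trans p2_le_N.
rewrite leq_exp2r // -(prednK (prime_gt0 p_pr)) ltnS.
by apply: dvdn_leq lcm_dvd; rewrite -subn1 subn_gt0 prime_gt1.
Qed.

Lemma Z_of_nat_divn m d : Z.of_nat (m %/ d) = (Z.of_nat m / Z.of_nat d)%Z.
Proof.
case: (posnP d) => [-> | d0]; first by rewrite divn0 Zdiv_0_r.
apply: (Z.div_unique _ _ _ (Z.of_nat (m %% d))); last by have := divn_eq m d; lia.
by left; have := ltn_pmod m d0; lia.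
Qed.

Lemma Z_of_nat_modn m d : Z.of_nat (m %% d) = (Z.of_nat m mod Z.of_nat d)%Z.
Proof.
case: (posnP d) => [-> | d0]; first by rewrite modn0 Zmod_0_r.
apply: (Z.mod_unique _ _ (Z.of_nat (m %/ d))); last by have := divn_eq m d; lia.
by left; have := ltn_pmod m d0; lia.
Qed.

Lemma Z_of_nat_expn_modn a e m : 0 < m ->
  Z.of_nat (a ^ e %% m) = Zpow_mod (Z.of_nat a) (Z.of_nat e) (Z.of_nat m).
Proof. by move=> m0; rewrite Zpow_mod_correct; [rewrite Z_of_nat_modn; lia | lia]. Qed.

Lemma Z_of_nat_biglcm (qs : seq Z) : all (Z.leb 0) qs ->
  Z.of_nat (\big[lcmn/1]_(q <- map Z.to_nat qs) q) = foldr Z.lcm 1%Z qs.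
Proof.
have lcmE x y : Z.of_nat (lcmn x y) = Z.lcm (Z.of_nat x) (Z.of_nat y) by lia.
elim: qs => [|q qs IHqs] /=; first by rewrite big_nil.
by case/andP=> /Z.leb_le q0 /IHqs <-; rewrite big_cons lcmE Z2Nat.id.
Qed.

Lemma coprime_Z x y : coprime x y = (Z.gcd (Z.of_nat x) (Z.of_nat y) =? 1)%Z.
Proof. lia. Qed.

(* The test [0 < r] makes the integer [r - 1] agree with the truncated [r.-1]
   of [pocklington]. *)
Definition pocklington_witness (n a q : Z) : bool :=
  let r := Zpow_mod a ((n - 1) / q) n in
  [&& (0 <=? q)%Z, ((n - 1) mod q =? 0)%Z, (0 <? r)%Z & (Z.gcd (r - 1) n =? 1)%Z].

Definition pocklington_cert (n a : Z) (qs : seq Z) : bool :=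
  [&& (1 <? n)%Z, (0 <=? a)%Z, (Zpow_mod a (n - 1) n =? 1)%Z,
      (n <? (foldr Z.lcm 1 qs + 1) ^ 2)%Z & all (pocklington_witness n a) qs].

Lemma pocklington_cert_prime n a qs : all (fun q => prime (Z.to_nat q)) qs ->
  pocklington_cert n a qs -> prime (Z.to_nat n).
Proof.
move=> qs_prime /and5P[/Z.ltb_lt n1 /Z.leb_le a0 /Z.eqb_eq fermat /Z.ltb_lt bound].
move=> witnesses.
have nE : Z.of_nat (Z.to_nat n) = n by lia.
have aE : Z.of_nat (Z.to_nat a) = a by lia.
have predE : Z.of_nat (Z.to_nat n).-1 = (n - 1)%Z by lia.
have N1 : 1 < Z.to_nat n by lia.
have qs0 : all (Z.leb 0) qs by apply: sub_all witnesses => q /and4P[].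
apply: (@pocklington _ (Z.to_nat a) (map Z.to_nat qs)).
- exact: N1.
- by rewrite all_map.
- rewrite all_map; apply: sub_all witnesses => q.
  case/and4P=> /Z.leb_le q0 /Z.eqb_eq q_dvd _ _ /=.
  by apply/eqP/Nat2Z.inj; rewrite Z_of_nat_modn predE Z2Nat.id.
- by apply/Nat2Z.inj; rewrite Z_of_nat_expn_modn ?predE ?aE ?nE ?fermat ?modn_small // ltnW.
- rewrite all_map; apply: sub_all witnesses => q.
  case/and4P=> /Z.leb_le q0 _ /Z.ltb_lt r0 /Z.eqb_eq r_coprime /=.
  set r := _ %% _; have rE : Z.of_nat r = Zpow_mod a ((n - 1) / q) n.
    by rewrite Z_of_nat_expn_modn ?Z_of_nat_divn ?predE ?aE ?nE ?Z2Nat.id // ltnW.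
  rewrite coprime_Z Nat2Z.inj_pred_max rE nE Z.max_r -?Z.sub_1_r ?r_coprime //.
  exact/Z.lt_le_pred.
- by move: (Z_of_nat_biglcm qs0); lia.
Qed.

Lemma in_T_of_Z (x q : Z) : (0 <= x)%Z -> prime (Z.to_nat q) -> q <> 3%Z ->
  ((x * x + x + 1) mod q = 0)%Z -> in_T (Z.to_nat x) (Z.to_nat q).
Proof.
move=> x0 q_pr q3 q_dvd; have q0 := prime_gt0 q_pr.
split; [done | split; first lia].
apply/eqP/Nat2Z.inj; rewrite Z_of_nat_modn Z2Nat.id; last lia.
have -> : Z.of_nat (Phi3 (Z.to_nat x)) = (x * x + x + 1)%Z by rewrite /Phi3; lia.
exact: q_dvd.
Qed.

Lemma in_Sigma_of_Z (q : Z) : prime (Z.to_nat q) -> (q mod 7 = 2 \/ q mod 7 = 4)%Z ->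
  in_Sigma (Z.to_nat q).
Proof.
move=> q_pr q_mod; split=> //; have q0 := prime_gt0 q_pr.
have : Z.of_nat (Z.to_nat q %% 7) = (q mod 7)%Z by rewrite Z_of_nat_modn Z2Nat.id //; lia.
lia.
Qed.

Lemma in_S_T k p x q : in_S k p x -> in_T x q -> in_S k.+1 p q.
Proof. by move=> Sx Tq; right; exists x. Qed.

Lemma good_31 : good 31.
Proof.
do 2!split=> //; exists 1, 331; split; last by split=> //; left.
by apply: (@in_S_T _ _ 31) => //; do !split.
Qed.

(* Large numbers are written [Z.to_nat z]: as nat literals they would be
   unary and could not be evaluated. *)
Lemma prime_3348577 : prime (Z.to_nat 3348577).
Proof. by apply: (@pocklington_cert_prime _ 2 [:: 7; 11; 151]%Z); vm_compute. Qed.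

Lemma prime_326039783 : prime (Z.to_nat 326039783).
Proof. by apply: (@pocklington_cert_prime _ 2 [:: 53; 59; 1409]%Z); vm_compute. Qed.

Lemma prime_987900542491 : prime (Z.to_nat 987900542491).
Proof.
apply: (@pocklington_cert_prime _ 2 [:: 326039783]%Z); last by vm_compute.
by apply/andP; split; [exact: prime_326039783 | by []].
Qed.

Lemma prime_3737657091169 : prime (Z.to_nat 3737657091169).
Proof. by apply: (@pocklington_cert_prime _ 2 [:: 7; 151; 4519]%Z); vm_compute. Qed.

Lemma good_13 : good 13.
Proof.
have S1 : in_S 1 13 61 by apply: (@in_S_T _ _ 13) => //; do !split.
have S2 : in_S 2 13 97 by apply: (in_S_T S1); do !split.
have S3 : in_S 3 13 3169 by apply: (in_S_T S2); do !split.
have S4 : in_S 4 13 (Z.to_nat 3348577).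
  by apply: (in_S_T S3); apply: (@in_T_of_Z 3169) prime_3348577 _ _; vm_compute.
have S5 : in_S 5 13 (Z.to_nat 3737657091169).
  by apply: (in_S_T S4); apply: in_T_of_Z prime_3737657091169 _ _; vm_compute.
have S6 : in_S 6 13 (Z.to_nat 987900542491).
  by apply: (in_S_T S5); apply: in_T_of_Z prime_987900542491 _ _; vm_compute.
do 2!split=> //; exists 6, (Z.to_nat 987900542491); split; first exact: S6.
by apply: in_Sigma_of_Z prime_987900542491 _; left.
Qed.

Theorem proposition4p1 (n alpha b : nat) :
  odd n -> perfect n -> 15 %| n ->
  0 < alpha -> 0 < b ->
  unitary_div (5 ^ alpha) n -> unitary_div (3 ^ (2 * b)) n ->
  3 %| (alpha + 1) * (2 * b + 1) ->
  exists p, prime p /\ p %| n /\ good p.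
Proof.
move=> _ n_perfect _ _ _ unitary5 unitary3.
rewrite Euclid_dvdM // !addn1 => /orP[dvd3_alpha | dvd3_b].
- exists 31; split=> //; split; last exact: good_31.
  by apply: (Phi3_dvd_perfect n_perfect _ unitary5).
- exists 13; split=> //; split; last exact: good_13.
  by apply: (Phi3_dvd_perfect n_perfect _ unitary3).
Qed.
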